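(* For every integer $t\ge 3$, $W(t-1)<t^{\frac{0.96}{\log\log t}}$, where $W(m)$ denotes the number of squarefree positive divisors of $m$ and $\log$ is the natural logarithm. *)

From mathcomp Require Import all_boot.
From Stdlib Require Import Reals.

Definition squarefree (n : nat) : bool :=
  (0 < n) && all (fun p => logn p n <= 1) (primes n).

Definition W (m : nat) : nat :=
  size [seq d <- divisors m | squarefree d].

(* Let m = t - 1.  A squarefree divisor of m is determined by the set of primes dividing it, so
   W(m) <= 2^k where k is the number of prime factors of m; and m is at least the
   product of the first k primes.  Writing L = ln t, the claim 2^k < t^(0.96/ln L)
   amounts to k ln 2 ln L < 0.96 L.  For k <= 1 this follows from ln L <= L - 1.
   Otherwise we exhibit b <= ln m with k ln 2 <= 0.96 b and k ln 2 ln b < 0.96 b,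
   and the concavity of ln carries the second inequality from b up to L.  For
   k < 60, b is a certified lower bound for the logarithm of the product of the
   first k primes; beyond, the product is at least 3^(k-2) (k-2)! and Stirling's
   bound j! >= (j/e)^j gives b. *)

From mathcomp Require Import all_boot.
From Stdlib Require Import Reals ZArith Lra.
From mathcomp Require Import zify.
(* [Reals] rebinds [^] in [nat_scope]; this restores [expn]. *)
Import ssrnat.

(** * Squarefree divisors *)

Lemma squarefree_prod_primes d : squarefree d -> \prod_(p <- primes d) p = d.
Proof.
case/andP=> d_gt0 /allP logn_le1.
rewrite [RHS](prod_prime_decomp d_gt0) prime_decompE big_map.
apply: eq_big_seq => p p_d.
have : 0 < logn p d by rewrite logn_gt0.
by have := logn_le1 p p_d; case: (logn p d) => [|[|]].
Qed.

Lemma squarefree_prod_primes_dvd n d : 0 < n -> d %| n -> squarefree d ->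
  \prod_(p <- primes n | p %| d) p = d.
Proof.
move=> n_gt0 d_n sq_d; rewrite -big_filter -[RHS]squarefree_prod_primes //.
have d_gt0 : 0 < d by case/andP: sq_d.
apply/perm_big/uniq_perm; rewrite ?filter_uniq ?primes_uniq // => p.
rewrite mem_filter !mem_primes n_gt0 d_gt0 /=.
apply/idP/idP=> [/andP[p_d /andP[-> _]] // | /andP[-> p_d]].
by rewrite p_d (dvdn_trans p_d d_n).
Qed.

Lemma W_le_exp2_card_primes n : 0 < n -> W n <= 2 ^ size (primes n).
Proof.
move=> n_gt0; set D := [seq d <- divisors n | squarefree d].
pose pattern d := map_tuple (dvdn^~ d) (in_tuple (primes n)).
have D_dvd d : d \in D -> d %| n /\ squarefree d.
  by rewrite mem_filter -dvdn_divisors // andbC => /andP.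
have pattern_inj : {in D &, injective pattern}.
  move=> d1 d2 /D_dvd[d1_n sq1] /D_dvd[d2_n sq2] /(congr1 val) /= eq12.
  rewrite -(squarefree_prod_primes_dvd _ _ n_gt0 d1_n sq1).
  rewrite -(squarefree_prod_primes_dvd _ _ n_gt0 d2_n sq2).
  by rewrite -big_filter -[in RHS]big_filter !filter_mask eq12.
rewrite /W -/D -(size_map pattern).
have /card_uniqP <- : uniq (map pattern D).
  by rewrite map_inj_in_uniq // filter_uniq ?divisors_uniq.
by rewrite -card_bool -card_tuple max_card.
Qed.

(** * Products of distinct primes *)

Lemma prod_primes_le n : 0 < n -> \prod_(p <- primes n) p <= n.
Proof.
move=> n_gt0; rewrite [X in _ <= X](prod_prime_decomp n_gt0) prime_decompE big_map.
rewrite big_seq [X in _ <= X]big_seq; apply: leq_prod => p p_n /=.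
by rewrite -{1}(expn1 p) leq_pexp2l ?logn_gt0 // prime_gt0 // (allP (all_prime_primes n)).
Qed.

Lemma leq_prod_of_count_lt (f : nat -> nat) (s : seq nat) :
  (forall i, count (fun x => x < f i) s <= i) ->
  \prod_(0 <= i < size s) f i <= \prod_(x <- s) x.
Proof.
move size_s: (size s) => k; elim: k s size_s => [|k IHk] s size_s count_s.
  by rewrite big_geq // (size0nil size_s) big_nil.
have /hasP[x x_s /= fk_le_x] : has (predC (fun x => x < f k)) s.
  have := count_predC (fun x => x < f k) s; have := count_s k.
  by rewrite has_count size_s; lia.
rewrite (perm_big _ (perm_to_rem x_s)) big_cons big_nat_recr //=.
rewrite [X in X <= _]mulnC; apply: leq_mul; first by rewrite leqNgt.
apply: IHk => [|i]; first by rewrite size_rem // size_s.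
by rewrite (leq_trans _ (count_s i)) // count_rem leq_subr.
Qed.

Definition first_primes : seq nat :=
  [:: 2; 3; 5; 7; 11; 13; 17; 19; 23; 29; 31; 37; 41; 43; 47; 53; 59; 61; 67; 71;
      73; 79; 83; 89; 97; 101; 103; 107; 109; 113; 127; 131; 137; 139; 149; 151;
      157; 163; 167; 173; 179; 181; 191; 193; 197; 199; 211; 223; 227; 229; 233;
      239; 241; 251; 257; 263; 269; 271; 277; 281].

(* A lower bound for the [i]-th prime, counting from [0]. *)
Definition prime_lb (i : nat) : nat := nth (3 * i.-1) first_primes i.

Lemma prime_lb_ge i : 3 * i.-1 <= prime_lb i.
Proof.
case: (ltnP i (size first_primes)) => [i_small | i_large]; last by rewrite /prime_lb nth_default.
have /allP/(_ i) : all (fun i => 3 * i.-1 <= prime_lb i) (iota 0 60) by vm_compute.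
by apply; rewrite mem_iota.
Qed.

Lemma count_prime_iota_mul3 m : count prime (iota 0 (3 * m)) <= m.+1.
Proof.
elim: m => // m IHm; case: (ltnP m 2) => [m_lt2 | m_ge2].
  by case: m m_lt2 {IHm} => [|[|]].
rewrite mulnSr iotaD count_cat add0n.
suff : count prime (iota (3 * m) 3) <= 1 by lia.
have composite_3m : ~~ prime (3 * m).
  by apply/negP => /(prime_nt_dvdP (d := 3))/(_ isT)/(_ (dvdn_mulr m (dvdnn 3))); lia.
have not_both : ~~ (prime (3 * m).+1 && prime (3 * m).+2).
  apply/negP => /andP[/even_prime p1 /even_prime p2].
  case: p1 => [|odd1]; first lia.
  case: p2 => [|odd2]; first lia.
  by move: odd2; rewrite oddS odd1.
by move: composite_3m not_both => /=; case: prime; case: prime; case: prime.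
Qed.

Lemma count_prime_lt_prime_lb i : count prime (iota 0 (prime_lb i)) <= i.
Proof.
case: (ltnP i (size first_primes)) => [i_small | i_large].
  have /allP/(_ i) : all (fun i => count prime (iota 0 (prime_lb i)) <= i) (iota 0 60).
    by vm_compute.
  by apply; rewrite mem_iota.
rewrite /prime_lb nth_default //; apply: leq_trans (count_prime_iota_mul3 _) _.
by rewrite prednK // (leq_trans _ i_large).
Qed.

Lemma prod_prime_lb_le n : 0 < n -> \prod_(0 <= i < size (primes n)) prime_lb i <= n.
Proof.
move=> n_gt0; apply: leq_trans (prod_primes_le _ n_gt0); apply: leq_prod_of_count_lt => i.
apply: leq_trans (count_prime_lt_prime_lb i); rewrite -!size_filter.
apply: uniq_leq_size => [|p]; first by rewrite filter_uniq ?primes_uniq.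
by rewrite !mem_filter mem_iota mem_primes => /andP[-> /and3P[-> _ _]].
Qed.

Lemma prod_prime_lb_ge j : 3 ^ j * j`! <= \prod_(0 <= i < j.+2) prime_lb i.
Proof.
elim: j => [|j IHj]; first by rewrite unlock; vm_compute.
rewrite big_nat_recr //= expnS factS.
have -> : 3 * 3 ^ j * (j.+1 * j`!) = 3 ^ j * j`! * (3 * j.+1) by nia.
exact: leq_mul IHj (prime_lb_ge j.+2).
Qed.

Open Scope R_scope.

(** * Real inequalities *)

Lemma INR_leq m n : (m <= n)%N -> INR m <= INR n.
Proof. by move/leP; exact: le_INR. Qed.

Lemma INR_expn (m k : nat) : INR (m ^ k)%N = INR m ^ k.
Proof. by elim: k => //= k IHk; rewrite expnS mult_INR IHk. Qed.

Lemma exp_mul_INR (m : nat) (y : R) : exp (INR m * y) = exp y ^ m.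
Proof.
elim: m => [|m IHm]; first by rewrite Rmult_0_l exp_0.
by rewrite S_INR Rmult_plus_distr_r Rmult_1_l exp_plus IHm /= Rmult_comm.
Qed.

Lemma Rdiv_le_of_le_mul a b c : 0 < c -> a <= b * c -> a / c <= b.
Proof.
by move=> c_gt0 le_abc; apply: (Rmult_le_reg_r c) => //; rewrite /Rdiv Rmult_assoc Rinv_l; lra.
Qed.

Lemma Rle_div_of_mul_le a b c : 0 < c -> a * c <= b -> a <= b / c.
Proof.
by move=> c_gt0 le_abc; apply: (Rmult_le_reg_r c) => //; rewrite /Rdiv Rmult_assoc Rinv_l; lra.
Qed.

Lemma ln_gt0 x : 1 < x -> 0 < ln x.
Proof. by move=> x_gt1; rewrite -ln_1; apply: ln_increasing; lra. Qed.

Lemma ln2_gt0 : 0 < ln 2.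
Proof. by apply: ln_gt0; lra. Qed.

Lemma ln_le_of_exp_le x r : exp r <= x -> r <= ln x.
Proof.
move=> le_rx; rewrite -(ln_exp r).
case: le_rx => [lt_rx | ->]; [left; exact: ln_increasing (exp_pos r) lt_rx | exact: Rle_refl].
Qed.

Lemma ln_lt_of_lt_exp x r : 0 < x -> x < exp r -> ln x < r.
Proof. by move=> x_gt0 lt_xr; rewrite -(ln_exp r); apply: ln_increasing. Qed.

Lemma ln_le_tangent a x : 0 < a -> 0 < x -> ln x <= ln a + x / a - 1.
Proof.
move=> a_gt0 x_gt0; have xa_gt0 : 0 < x / a by apply: Rdiv_lt_0_compat.
have := exp_ineq1_le (ln (x / a)).
rewrite exp_ln // /Rdiv ln_mult ?ln_Rinv //; [lra | exact: Rinv_0_lt_compat].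
Qed.

Lemma nonneg_of_deriv_nonneg (h h' : R -> R) y :
  (forall c, derivable_pt_lim h c (h' c)) -> (forall c, 0 <= c -> 0 <= h' c) ->
  h 0 = 0 -> 0 <= y -> 0 <= h y.
Proof.
move=> h_deriv h'_ge0 h0 [y_gt0 | <-]; last by rewrite h0; exact: Rle_refl.
have [c [mvt [c_gt0 _]]] := MVT_cor2 h h' 0 y y_gt0 (fun c _ => h_deriv c).
by have := h'_ge0 c (Rlt_le _ _ c_gt0); nra.
Qed.

Lemma exp_ge_taylor2 y : 0 <= y -> 1 + y + y ^ 2 / 2 <= exp y.
Proof.
move=> y_ge0; suff : 0 <= exp y - (1 + y + y * y * / 2) by rewrite /= Rmult_1_r; lra.
apply: (nonneg_of_deriv_nonneg (fun z => exp z - (1 + z + z * z * / 2))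
          (fun z => exp z - (1 + z))) => // [c | c _ | ]; last by rewrite exp_0; lra.
- have -> : exp c - (1 + c) = exp c - (0 + 1 + ((1 * c + c * 1) * / 2 + c * c * 0)) by field.
  apply: derivable_pt_lim_minus; first exact: derivable_pt_lim_exp.
  apply: derivable_pt_lim_plus.
    apply: derivable_pt_lim_plus; [exact: derivable_pt_lim_const | exact: derivable_pt_lim_id].
  apply: (derivable_pt_lim_mult (fun z => z * z)); last exact: derivable_pt_lim_const.
  by apply: derivable_pt_lim_mult; exact: derivable_pt_lim_id.
- by have := exp_ineq1_le c; lra.
Qed.

Lemma exp_le_pade y : 0 <= y -> exp y * (2 - y) <= 2 + y.
Proof.
move=> y_ge0; suff : 0 <= 2 + y - (2 - y) * exp y by lra.
apply: (nonneg_of_deriv_nonneg (fun z => 2 + z - (2 - z) * exp z)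
          (fun z => 1 - (1 - z) * exp z)) => // [c | c c_ge0 | ]; last by rewrite exp_0; lra.
- have -> : 1 - (1 - c) * exp c = 0 + 1 - ((0 - 1) * exp c + (2 - c) * exp c) by ring.
  apply: derivable_pt_lim_minus.
    apply: derivable_pt_lim_plus; [exact: derivable_pt_lim_const | exact: derivable_pt_lim_id].
  apply: derivable_pt_lim_mult; last exact: derivable_pt_lim_exp.
  apply: derivable_pt_lim_minus; [exact: derivable_pt_lim_const | exact: derivable_pt_lim_id].
- have := exp_ineq1_le (- c); rewrite exp_Ropp.
  by have := exp_pos c; have := Rinv_r (exp c) (exp_neq_0 c); nra.
Qed.

Lemma exp_mul_le_pade (m : nat) y : 0 <= y < 2 -> exp (INR m * y) <= ((2 + y) / (2 - y)) ^ m.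
Proof.
move=> [y_ge0 y_lt2]; rewrite exp_mul_INR; apply: pow_incr; split; first exact: Rlt_le (exp_pos y).
by apply: Rle_div_of_mul_le; [lra | exact: exp_le_pade].
Qed.

Lemma taylor2_le_exp_mul (m : nat) y : 0 <= y -> (1 + y + y ^ 2 / 2) ^ m <= exp (INR m * y).
Proof.
move=> y_ge0; rewrite exp_mul_INR; apply: pow_incr; split; last exact: exp_ge_taylor2.
by have := pow2_ge_0 y; lra.
Qed.

Lemma ln_fact_ge j : INR j * ln (INR j) - INR j <= ln (INR j`!).
Proof.
elim: j => [|j IHj]; first by rewrite fact0 INR_0 INR_1 ln_1; lra.
have fact_gt0 : 0 < INR j`! by apply: lt_0_INR; apply/ltP; exact: fact_gt0.
have j_ge0 := pos_INR j.
rewrite factS mult_INR ln_mult ?S_INR; [|lra | exact: fact_gt0].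
suff : INR j * (ln (INR j + 1) - ln (INR j)) <= 1 by nra.
case: j {IHj fact_gt0 j_ge0} => [|j]; first by rewrite INR_0; lra.
have j_gt0 : 0 < INR j.+1 by apply: lt_0_INR; apply/ltP.
have := ln_le_tangent (INR j.+1) (INR j.+1 + 1) j_gt0 ltac:(lra).
have -> : (INR j.+1 + 1) / INR j.+1 = 1 + / INR j.+1 by field; lra.
by have := Rinv_r (INR j.+1) ltac:(lra); nra.
Qed.

Lemma exp_le_pow3_fact j : exp (INR j * (ln (INR j) + ln 3 - 1)) <= INR (3 ^ j * j`!).
Proof.
have fact_gt0 : 0 < INR j`! by apply: lt_0_INR; apply/ltP; exact: fact_gt0.
have -> : INR j * (ln (INR j) + ln 3 - 1) = INR j * ln 3 + (INR j * ln (INR j) - INR j) by ring.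
rewrite exp_plus mult_INR INR_expn exp_mul_INR exp_ln; last lra.
have -> : INR 3 = 3 by rewrite INR_IZR_INZ.
apply: Rmult_le_compat_l; first by apply: pow_le; lra.
rewrite -[X in _ <= X](exp_ln _ fact_gt0).
by case: (ln_fact_ge j) => [lt | ->]; [left; exact: exp_increasing | exact: Rle_refl].
Qed.

Lemma mul_ln_lt_of_le K c L : 0 <= K <= c -> 0 < c -> 0 < L -> K * ln L < c * L.
Proof.
move=> [K_ge0 K_le] c_gt0 L_gt0.
have := ln_le_tangent 1 L Rlt_0_1 L_gt0; rewrite ln_1 Rdiv_1_r.
by case: (Rle_lt_dec (ln L) 0) => ln_L; nra.
Qed.

Lemma mul_ln_lt_mono K c b L : 0 <= K -> 0 < b <= L -> K <= c * b -> K * ln b < c * b ->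
  K * ln L < c * L.
Proof.
move=> K_ge0 [b_gt0 b_le] K_le K_lt.
have tangent := ln_le_tangent b L b_gt0 (Rlt_le_trans _ _ _ b_gt0 b_le).
set q := L / b in tangent.
have L_eq : L = q * b by rewrite /q; field; lra.
have q_ge1 : 1 <= q by rewrite L_eq in b_le; nra.
have := Rmult_le_compat_l K _ _ K_ge0 tangent.
have : K * (q - 1) <= c * b * (q - 1) by apply: Rmult_le_compat_r; lra.
have -> : c * L = c * b + c * b * (q - 1) by rewrite L_eq; ring.
lra.
Qed.

Lemma pow2_lt_Rpower_lnln k c N : 1 < ln N -> INR k * ln 2 * ln (ln N) < c * ln N ->
  2 ^ k < Rpower N (c / ln (ln N)).
Proof.
move=> lnN_gt1 lt_k; have lnlnN_gt0 := ln_gt0 _ lnN_gt1.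
rewrite /Rpower -{1}(exp_ln 2 ltac:(lra)) -exp_mul_INR.
apply: exp_increasing; apply: (Rmult_lt_reg_r (ln (ln N))) => //.
by have -> : c / ln (ln N) * ln N * ln (ln N) = c * ln N by field; lra.
Qed.

(** * Certified numerical bounds *)

Definition div_up (n q : Z) : Z := ((n + q - 1) / q)%Z.

Lemma div_up_ge n q : (0 < q)%Z -> IZR n / IZR q <= IZR (div_up n q).
Proof.
move=> q_gt0; have : (n <= div_up n q * q)%Z.
  rewrite /div_up; have := Z.div_mod (n + q - 1) q ltac:(lia).
  by have := Z.mod_pos_bound (n + q - 1) q q_gt0; nia.
move/IZR_le; rewrite mult_IZR => le_n.
by apply: Rdiv_le_of_le_mul le_n; apply: IZR_lt.
Qed.

Lemma div_le n q : (0 < q)%Z -> IZR (n / q) <= IZR n / IZR q.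
Proof.
move=> q_gt0; have /IZR_le := Z.mul_div_le n q q_gt0; rewrite mult_IZR Rmult_comm => le_n.
by apply: Rle_div_of_mul_le le_n; apply: IZR_lt.
Qed.

(* Fixed-point powers with scale [s]: [pow_up s x k / s] and [pow_down s x k / s]
   bound [(x / s) ^ k] from above and below. *)
Fixpoint pow_up (s x : Z) (k : nat) : Z :=
  if k is k'.+1 then div_up (pow_up s x k' * x) s else s.

Fixpoint pow_down (s x : Z) (k : nat) : Z :=
  if k is k'.+1 then (pow_down s x k' * x / s)%Z else s.

Lemma pow_up_ge s x k : (0 < s)%Z -> (0 <= x)%Z ->
  (IZR x / IZR s) ^ k <= IZR (pow_up s x k) / IZR s.
Proof.
move=> /[dup] s_gt0 /IZR_lt s_gt0' /IZR_le x_ge0.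
elim: k => [|k IHk] /=; first by right; field; lra.
apply: Rle_trans (_ : IZR (pow_up s x k) / IZR s * (IZR x / IZR s) <= _).
  by rewrite Rmult_comm; apply: Rmult_le_compat_r => //; exact: Rle_mult_inv_pos.
apply: Rle_trans (Rmult_le_compat_r _ _ _ (Rlt_le _ _ (Rinv_0_lt_compat _ s_gt0'))
                    (div_up_ge _ _ s_gt0)).
by right; rewrite mult_IZR; field; lra.
Qed.

Lemma pow_down_le s x k : (0 < s)%Z -> (0 <= x)%Z ->
  IZR (pow_down s x k) / IZR s <= (IZR x / IZR s) ^ k.
Proof.
move=> s_gt0 x_ge0; have s_gt0' := IZR_lt _ _ s_gt0; have x_ge0' := IZR_le _ _ x_ge0.
elim: k => [|k IHk] /=; first by right; field; lra.
apply: Rle_trans (Rmult_le_compat_r _ _ _ (Rlt_le _ _ (Rinv_0_lt_compat _ s_gt0'))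
                    (div_le _ _ s_gt0)) _.
apply: Rle_trans (_ : _ <= IZR (pow_down s x k) / IZR s * (IZR x / IZR s)) _.
  by right; rewrite mult_IZR; field; lra.
by rewrite Rmult_comm; apply: Rmult_le_compat_l => //; exact: Rle_mult_inv_pos.
Qed.

(* Certifies [exp (a / d) <= p]: with [y = a / (d m)] and [u = 2 d m] we have
   [exp (a / d) = exp y ^ m] and [exp y <= (2 + y) / (2 - y) = (u + a) / (u - a)],
   which [x] bounds from above at scale [2 ^ 32]. *)
Definition exp_le_check (m : nat) (d a p : Z) : bool :=
  let u := (2 * d * Z.of_nat m)%Z in
  let x := div_up (2 ^ 32 * (u + a)) (u - a) in
  [&& (0 <? d)%Z, (0 <=? a)%Z, (a <? u)%Z & (pow_up (2 ^ 32) x m <=? p * 2 ^ 32)%Z].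

Lemma exp_le_check_sound {m d a p} : exp_le_check m d a p -> exp (IZR a / IZR d) <= IZR p.
Proof.
case/and4P => /Z.ltb_lt/IZR_lt d_gt0 /Z.leb_le/IZR_le a_ge0 /Z.ltb_lt a_lt /Z.leb_le/IZR_le.
set u := (2 * d * Z.of_nat m)%Z in a_lt *; set s := (2 ^ 32)%Z; set x := div_up _ _.
rewrite mult_IZR => cert; have s_gt0 : (0 < s)%Z by [].
have ratio := div_up_ge (s * (u + a)) (u - a) ltac:(lia); rewrite -/x in ratio.
have ua_gt0 := IZR_lt _ _ (proj2 (Z.lt_0_sub _ _) a_lt).
have u_eq : IZR u = 2 * IZR d * INR m by rewrite /u !mult_IZR -INR_IZR_INZ.
rewrite minus_IZR mult_IZR plus_IZR in ua_gt0 ratio.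
(* keeps [lra] and [rewrite] from unfolding [2 ^ 32] *)
clearbody x u s.
have s_gt0' := IZR_lt _ _ s_gt0; have m_gt0 : 0 < INR m by nra.
have x_ge0 : (0 <= x)%Z by apply: le_IZR; apply: Rle_trans ratio; apply: Rle_mult_inv_pos; nra.
set y := IZR a / (IZR d * INR m).
have -> : IZR a / IZR d = INR m * y by rewrite /y; field; lra.
have pade_eq : (2 + y) / (2 - y) = IZR s * (IZR u + IZR a) / (IZR u - IZR a) / IZR s.
  by rewrite u_eq /y; field; split; nra.
have y_range : 0 <= y < 2.
  have a_eq : y * (IZR d * INR m) = IZR a by rewrite /y; field; lra.
  by split; [apply: Rle_mult_inv_pos | ]; nra.
have pade_le : (2 + y) / (2 - y) <= IZR x / IZR s.
  by rewrite pade_eq; apply: Rmult_le_compat_r ratio; apply/Rlt_le/Rinv_0_lt_compat.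
have pade_ge0 : 0 <= (2 + y) / (2 - y) by apply: Rle_mult_inv_pos; lra.
apply: Rle_trans (exp_mul_le_pade m y y_range) _.
apply: Rle_trans (pow_incr _ _ m (conj pade_ge0 pade_le)) _.
apply: Rle_trans (pow_up_ge _ _ m s_gt0 x_ge0) _.
exact: Rdiv_le_of_le_mul.
Qed.

(* Certifies [b / e < exp (a / d)]: with [v = d m], [y = a / v] and [q = 2 v ^ 2]
   we have [exp (a / d) = exp y ^ m] and [exp y >= 1 + y + y ^ 2 / 2 =
   (q + 2 a v + a ^ 2) / q], which [x] bounds from below at scale [2 ^ 32]. *)
Definition exp_gt_check (m : nat) (d a b e : Z) : bool :=
  let v := (d * Z.of_nat m)%Z in
  let q := (2 * v * v)%Z in
  let x := ((q + 2 * a * v + a * a) * 2 ^ 32 / q)%Z in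
  [&& (0 <? v)%Z, (0 <=? a)%Z, (0 <? e)%Z & (b * 2 ^ 32 <? e * pow_down (2 ^ 32) x m)%Z].

Lemma exp_gt_check_sound {m d a b e} :
  exp_gt_check m d a b e -> IZR b / IZR e < exp (IZR a / IZR d).
Proof.
case/and4P => /Z.ltb_lt v_gt0 /Z.leb_le a_ge0 /Z.ltb_lt/IZR_lt e_gt0 /Z.ltb_lt/IZR_lt.
set v := (d * Z.of_nat m)%Z in v_gt0 *; set q := (2 * v * v)%Z; set s := (2 ^ 32)%Z.
set x := (_ / q)%Z; rewrite 2!mult_IZR => cert.
have s_gt0 : (0 < s)%Z by []; have q_gt0 : (0 < q)%Z by rewrite /q; nia.
have x_ge0 : (0 <= x)%Z by apply: Z.div_pos => //; nia.
have ratio := div_le ((q + 2 * a * v + a * a) * s) q q_gt0; rewrite -/x in ratio.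
have pd_le := pow_down_le s x m s_gt0 x_ge0.
have v_eq : IZR v = IZR d * INR m by rewrite /v mult_IZR -INR_IZR_INZ.
have q_eq : IZR q = 2 * IZR v * IZR v by rewrite /q !mult_IZR.
rewrite mult_IZR !plus_IZR 3!mult_IZR in ratio.
clearbody x q s v.
have s_gt0' := IZR_lt _ _ s_gt0; have a_ge0' := IZR_le _ _ a_ge0; have v_gt0' := IZR_lt _ _ v_gt0.
have m_ge0 := pos_INR m; have d_gt0 : 0 < IZR d by nra.
have m_gt0 : 0 < INR m by nra.
set y := IZR a / IZR v.
have y_ge0 : 0 <= y by apply: Rle_mult_inv_pos.
have -> : IZR a / IZR d = INR m * y by rewrite /y v_eq; field; lra.
have x_le : IZR x / IZR s <= 1 + y + y ^ 2 / 2.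
  apply: Rle_trans (Rmult_le_compat_r _ _ _ (Rlt_le _ _ (Rinv_0_lt_compat _ s_gt0')) ratio) _.
  by right; rewrite q_eq /y; field; lra.
have x_ge0' : 0 <= IZR x / IZR s by apply: Rle_mult_inv_pos => //; exact: IZR_le.
apply: Rlt_le_trans (Rle_trans _ _ _ pd_le (Rle_trans _ _ _
  (pow_incr _ _ m (conj x_ge0' x_le)) (taylor2_le_exp_mul m y y_ge0))).
have -> : IZR b / IZR e = IZR b * IZR s / (IZR e * IZR s) by field; lra.
have -> : IZR (pow_down s x m) / IZR s = IZR e * IZR (pow_down s x m) / (IZR e * IZR s).
  by field; lra.
by apply: Rmult_lt_compat_r => //; apply: Rinv_0_lt_compat; nra.
Qed.

Lemma ln2_lt : ln 2 < 6932 / 10000.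
Proof.
apply: ln_lt_of_lt_exp; first lra.
by have := @exp_gt_check_sound 64 10000 6932 2 1 ltac:(by vm_compute); rewrite Rdiv_1_r.
Qed.

Lemma ln3_ge : 10985 / 10000 <= ln 3.
Proof. exact/ln_le_of_exp_le/(@exp_le_check_sound 64 10000 10985 3); vm_compute. Qed.

Lemma ln3_lt : ln 3 < 11 / 10.
Proof.
apply: ln_lt_of_lt_exp; first lra.
have := @exp_gt_check_sound 64 10000 11000 3 1 ltac:(by vm_compute).
by rewrite Rdiv_1_r (_ : 11000 / 10000 = 11 / 10) //; field.
Qed.

Lemma ln_ge4 x : 58 <= x -> 4 <= ln x.
Proof.
have := @exp_le_check_sound 64 10000 40000 58 ltac:(by vm_compute).
rewrite (_ : 40000 / 10000 = 4); last by field.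
by move=> exp4_le x_ge; apply: ln_le_of_exp_le; lra.
Qed.

(* Entry [i] is [10^4] times a lower bound for the logarithm of the [i]-th prime. *)
Definition ln_prime_lb_table : seq Z :=
  [:: 6931; 10985; 16093; 19457; 23976; 25646; 28327; 29439; 31348; 33665;
      34331; 36099; 37125; 37601; 38489; 39690; 40761; 41094; 42031; 42611;
      42888; 43677; 44170; 44867; 45727; 46131; 46327; 46707; 46892; 47252;
      48418; 48728; 49175; 49320; 50013; 50147; 50536; 50910; 51152; 51505;
      51845; 51956; 52493; 52597; 52802; 52902; 53487; 54039; 54217; 54304;
      54477; 54731; 54814; 55220; 55456; 55686; 55911; 55985; 56204; 56347]%Z.

Fixpoint ln_prod_prime_lb (k : nat) : Z :=
  if k is k'.+1 then (ln_prod_prime_lb k' + nth 0 ln_prime_lb_table k')%Z else 0%Z.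

(* Entry [k - 2] is [10^4] times an upper bound for [ln (ln_prod_prime_lb k / 10^4)]. *)
Definition lnln_prod_ub_table : seq Z :=
  [:: 5832; 12242; 16767; 20473; 23336; 25765; 27788; 29570; 31186; 32603;
      33904; 35086; 36156; 37144; 38071; 38941; 39748; 40511; 41229; 41904;
      42548; 43159; 43744; 44307; 44845; 45357; 45848; 46319; 46771; 47215;
      47642; 48056; 48454; 48843; 49218; 49582; 49936; 50280; 50614; 50940;
      51256; 51566; 51867; 52160; 52446; 52727; 53002; 53272; 53534; 53791;
      54043; 54289; 54530; 54767; 55000; 55228; 55451; 55671]%Z.

Lemma exp_ln_prime_lb_le i : (i < 60)%N ->
  exp (IZR (nth 0%Z ln_prime_lb_table i) / 10000) <= INR (prime_lb i).
Proof.
have table_ok : all (fun i => exp_le_check 64 10000 (nth 0%Z ln_prime_lb_table i)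
                                  (Z.of_nat (prime_lb i))) (iota 0 60).
  by vm_compute.
by move=> i_lt; rewrite INR_IZR_INZ; apply/exp_le_check_sound/(allP table_ok); rewrite mem_iota.
Qed.

Lemma exp_ln_prod_prime_lb_le k : (k <= 60)%N ->
  exp (IZR (ln_prod_prime_lb k) / 10000) <= INR (\prod_(0 <= i < k) prime_lb i).
Proof.
elim: k => [|k IHk] k_le; first by rewrite big_geq // Rdiv_0_l exp_0 INR_1; lra.
rewrite big_nat_recr // mult_INR [ln_prod_prime_lb _]/= plus_IZR Rdiv_plus_distr exp_plus.
apply: Rmult_le_compat; [exact: Rlt_le (exp_pos _) | exact: Rlt_le (exp_pos _) | |].
  by apply: IHk; lia.
by apply: exp_ln_prime_lb_le.
Qed.

(* [6932 / 10^4] bounds [ln 2] from above. *)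
Definition small_case_check (k : nat) : bool :=
  let s := ln_prod_prime_lb k in
  let c := nth 0%Z lnln_prod_ub_table k.-2 in
  [&& exp_gt_check 64 10000 c s 10000,
      (100 * Z.of_nat k * 6932 * c <? 96 * s * 10000)%Z &
      (100 * Z.of_nat k * 6932 <=? 96 * s)%Z].

Lemma small_case_check_ok : all small_case_check (iota 2 58).
Proof. by vm_compute. Qed.

Lemma small_case_ineq k : (2 <= k < 60)%N ->
  let b := IZR (ln_prod_prime_lb k) / 10000 in
  [/\ 0 < b, INR k * ln 2 <= 96 / 100 * b & INR k * ln 2 * ln b < 96 / 100 * b].
Proof.
move=> k_range b; have /and3P[exp_gt /Z.ltb_lt/IZR_lt lt_c /Z.leb_le/IZR_le le_s] :
  small_case_check k by apply: (allP small_case_check_ok); rewrite mem_iota; lia.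
have c_ge0 : 0 <= IZR (nth 0%Z lnln_prod_ub_table k.-2).
  by move: exp_gt => /and4P[_ /Z.leb_le/IZR_le].
have {}exp_gt := exp_gt_check_sound exp_gt.
rewrite !mult_IZR -INR_IZR_INZ in lt_c le_s.
set c := IZR (nth _ _ _) in c_ge0 exp_gt lt_c.
have k_ge2 : 2 <= INR k by apply: (INR_leq 2); lia.
have ln2_ub := ln2_lt; have ln2_pos := ln2_gt0.
have s_eq : IZR (ln_prod_prime_lb k) = 10000 * b by rewrite /b; field.
rewrite s_eq in lt_c le_s; have b_gt0 : 0 < b by lra.
have ln_b : ln b < c / 10000 by apply: ln_lt_of_lt_exp.
have K_ge0 : 0 <= INR k * ln 2 by nra.
have ln_b_le : INR k * ln 2 * ln b <= INR k * ln 2 * (c / 10000).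
  by apply: Rmult_le_compat_l; lra.
have ln2_le : INR k * ln 2 * (c / 10000) <= INR k * (6932 / 10000) * (c / 10000).
  by apply: Rmult_le_compat_r; nra.
by split; nra.
Qed.

Lemma large_case_ineq j : (58 <= j)%N ->
  let b := INR j * (ln (INR j) + ln 3 - 1) in
  INR j.+2 * ln 2 <= 96 / 100 * b /\ INR j.+2 * ln 2 * ln b < 96 / 100 * b.
Proof.
move=> j_ge b; have J_ge : 58 <= INR j by have := INR_leq 58 j j_ge; rewrite INR_IZR_INZ.
rewrite S_INR S_INR /b; set J := INR j in J_ge *.
have u_ge : 4 <= ln J := ln_ge4 _ J_ge.
have ln2_ub := ln2_lt; have ln2_pos := ln2_gt0; have ln3_lb := ln3_ge; have ln3_ub := ln3_lt.
set u := ln J in u_ge *.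
(* tangent to [ln] at [4], where [ln 4 = 2 ln 2] *)
have ln_b : ln (J * (u + ln 3 - 1)) <= u + 2 * ln 2 + (u + ln 3 - 1) / 4 - 1.
  have u3_gt0 : 0 < u + ln 3 - 1 by lra.
  have ln4 : ln 4 = 2 * ln 2 by rewrite (_ : 4 = 2 * 2) ?ln_mult; lra.
  have := ln_le_tangent 4 _ (ltac:(lra) : 0 < 4) u3_gt0.
  by rewrite ln_mult -/u; lra.
have ln_b_ge0 : 0 <= ln (J * (u + ln 3 - 1)) by apply/Rlt_le/ln_gt0; nra.
split; first nra.
set Y := ln (J * (u + ln 3 - 1)) in ln_b ln_b_ge0 *.
have mono : 0 <= (J - 58) * (u - 4) by nra.
have : (J + 1 + 1) * ln 2 * Y <= (J + 1 + 1) * (6932 / 10000) * Y.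
  by apply: Rmult_le_compat_r => //; apply: Rmult_le_compat_l; lra.
have : (J + 1 + 1) * (6932 / 10000) * Y
       <= (J + 1 + 1) * (6932 / 10000) * (5 / 4 * u + 4114 / 10000).
  by apply: Rmult_le_compat_l; lra.
have : J * (u + 985 / 10000) <= J * (u + ln 3 - 1) by apply: Rmult_le_compat_l; lra.
lra.
Qed.

Lemma ln_prod_prime_lb_witness k : (1 < k)%N ->
  exists b, [/\ 0 < b, exp b <= INR (\prod_(0 <= i < k) prime_lb i),
             INR k * ln 2 <= 96 / 100 * b & INR k * ln 2 * ln b < 96 / 100 * b].
Proof.
move=> k_gt1; case: (ltnP k 60) => [k_lt60 | k_ge60].
  have [b_gt0 K_le K_lt] := small_case_ineq k ltac:(lia).
  by exists (IZR (ln_prod_prime_lb k) / 10000); split => //; apply: exp_ln_prod_prime_lb_le; lia.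
case: k k_gt1 k_ge60 => [|[|j]] // _ j_ge.
have [K_le K_lt] := large_case_ineq j ltac:(lia).
have ln2_pos := ln2_gt0.
exists (INR j * (ln (INR j) + ln 3 - 1)); split => //.
- by rewrite !S_INR in K_le; have := pos_INR j; nra.
- apply: Rle_trans (exp_le_pow3_fact j) _.
  exact/INR_leq/prod_prime_lb_ge.
Qed.

Lemma card_primes_mul_lnln_lt n : (1 < n)%N ->
  INR (size (primes n)) * ln 2 * ln (ln (INR n.+1)) < 96 / 100 * ln (INR n.+1).
Proof.
move=> n_gt1; set k := size (primes n).
have n_ge2 : 2 <= INR n by apply: (INR_leq 2).
have lnN_gt0 : 0 < ln (INR n.+1) by apply: ln_gt0; rewrite S_INR; lra.
have ln2_ub := ln2_lt; have ln2_pos := ln2_gt0.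
case: (leqP k 1) => [k_le1 | k_gt1].
  have := INR_leq _ _ k_le1; rewrite INR_1 => k_le.
  by apply: mul_ln_lt_of_le; [split; have := pos_INR k; nra | lra | lra].
have [b [b_gt0 exp_b_le K_le K_lt]] := ln_prod_prime_lb_witness _ k_gt1.
apply: (mul_ln_lt_mono _ _ b) => //; [by have := pos_INR k; nra | split => //].
apply: ln_le_of_exp_le; apply: Rle_trans exp_b_le _; rewrite S_INR.
by have := INR_leq _ _ (prod_prime_lb_le _ (ltnW n_gt1)); rewrite -/k; lra.
Qed.

Close Scope R_scope.

Theorem lemma2p4 (t : nat) (ht : 3 <= t) :
  (INR (W (t - 1)) < Rpower (INR t) ((96 / 100) / ln (ln (INR t))))%R.
Proof.
case: t ht => // n n_gt1; rewrite subn1 succnK.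
apply: (Rle_lt_trans _ (2 ^ size (primes n))).
  rewrite [2%R](_ : _ = INR 2) // -INR_expn.
  by apply/INR_leq/W_le_exp2_card_primes; lia.
apply: pow2_lt_Rpower_lnln; last exact: card_primes_mul_lnln_lt.
have le3 : (3 <= INR n.+1)%R by have := INR_leq 3 n.+1 n_gt1; rewrite INR_IZR_INZ.
have ln3_le : (ln 3 <= ln (INR n.+1))%R by apply: ln_le_of_exp_le; rewrite exp_ln //; lra.
by have := ln3_ge; lra.
Qed.
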